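(* Let $\mathbf{P}=(P,\le,\mathcal T)$ be a $2$-separated topological poset, and let $F$ be a closed filter in $\mathbf{P}^*$. Put $B=\bigcap F$. Then $$F=\{x\in\mathbf{P}^*: B\subseteq x\}.$$ In particular, $B\neq\emptyset$.
   Context: A topological poset $(P,\le,\mathcal T)$ is a poset with a Hausdorff topology; it is $2$-separated if it admits a continuous order-embedding ($x\le y\iff f(x)\le f(y)$, $f$ injective) into a power of the two-element chain $\{0<1\}$ with the product topology. A final segment is an upward-closed subset of $P$. $\mathbf{P}^*$ denotes the set of continuous order-preserving maps $P\to\{0,1\}$, identified with the clopen final segments of $P$ (via preimage of $1$), a lattice under $\cup,\cap$, with the topology of pointwise convergence (subspace of $\{0,1\}^P$). A filter in $\mathbf{P}^*$ is a nonempty subset closed under finite intersections and under supersets within $\mathbf{P}^*$, not containing $\emptyset$; it is closed if it is closed in this topology. *)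

From HB Require Import structures.
From mathcomp Require Import all_boot all_order all_algebra.
From mathcomp Require Import all_classical all_reals all_analysis.
Set Implicit Arguments. Unset Strict Implicit. Unset Printing Implicit Defensive.
Local Open Scope classical_set_scope.

Definition poset_rel (T : Type) (le : T -> T -> Prop) : Prop :=
  (forall x, le x x) /\
  (forall x y, le x y -> le y x -> x = y) /\
  (forall x y z, le x y -> le y z -> le x z).

(* 2-separated: a continuous order-embedding into a power {0<1}^I of the
   two-element chain (bool, discrete topology, false < true) with the product
   topology ({ptws I -> bool}). *)
Definition two_separated (T : topologicalType) (le : T -> T -> Prop) : Prop :=
  exists (I : Type) (f : T -> {ptws I -> bool}),
    continuous f /\ injective f /\
    (forall x y, le x y <-> (forall i, f x i ==> f y i)).

(* P^* : continuous order-preserving maps P -> {0,1}, i.e. (characteristic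
   functions of) clopen final segments; as a subset of {0,1}^P. *)
Definition Pstar (T : topologicalType) (le : T -> T -> Prop)
  : set {ptws T -> bool} :=
  [set g | continuous (g : T -> bool) /\ (forall x y, le x y -> g x ==> g y)].

Definition seg_sub (T : Type) (g h : T -> bool) : Prop :=
  forall p, g p -> h p.

Definition Pstar_filter (T : topologicalType) (le : T -> T -> Prop)
  (F : set {ptws T -> bool}) : Prop :=
  F `<=` Pstar le /\
  F !=set0 /\
  (forall g h, F g -> F h -> F (fun p => g p && h p)) /\
  (forall g h, F g -> Pstar le h -> seg_sub g h -> F h) /\
  ~ F (fun _ => false).

Definition Pstar_closed (T : topologicalType) (le : T -> T -> Prop)
  (F : set {ptws T -> bool}) : Prop :=
  exists C : set {ptws T -> bool}, closed C /\ F = C `&` Pstar le.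

From HB Require Import structures.
From mathcomp Require Import all_boot all_order all_algebra.
From mathcomp Require Import all_classical all_reals all_analysis.
Local Open Scope classical_set_scope.
Set Implicit Arguments.
Unset Strict Implicit.
Unset Printing Implicit Defensive.

(* If [B] is contained in [g], the maps [h || g] with [h] in [F] lie in [F]
   and, as [h] shrinks, converge pointwise to [g]: at a point outside [g],
   hence outside [B], some [h] in [F] already vanishes.  So [g] is in the
   closure of [F], hence in [F].  Applied to the constant [false] map this
   shows [B] is nonempty.  No order-theoretic or separation hypothesis on
   [P] is needed for this. *)

Definition filter_kernel (T : Type) (F : set {ptws T -> bool}) : set T :=
  [set p | forall g, F g -> g p].

Lemma continuous_orb (T : topologicalType) (f g : T -> bool) :
  continuous f -> continuous g -> continuous (fun p => f p || g p).
Proof.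
move=> cf cg x; apply/discrete_cvg.
have /discrete_cvg nf := cf x; have /discrete_cvg ng := cg x.
have nfg : nbhs x (f @^-1` [set f x] `&` g @^-1` [set g x]) by exact: filterI.
by apply: filterS nfg => y [/= -> ->].
Qed.

Lemma Pstar_orb (T : topologicalType) (le : T -> T -> Prop)
    (g h : {ptws T -> bool}) :
  Pstar le g -> Pstar le h -> Pstar le (fun p => g p || h p).
Proof.
move=> [cg mg] [ch mh]; split; first exact: continuous_orb.
move=> x y lxy; apply/implyP => /orP[gx|hx]; apply/orP.
  by left; exact: (implyP (mg _ _ lxy)).
by right; exact: (implyP (mh _ _ lxy)).
Qed.

Lemma Pstar_filter_orb (T : topologicalType) (le : T -> T -> Prop)
    (F : set {ptws T -> bool}) (g h : {ptws T -> bool}) :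
  Pstar_filter le F -> F h -> Pstar le g -> F (fun p => h p || g p).
Proof.
move=> [FP [_ [_ [FU _]]]] Fh Pg; apply: (FU h) => //; last by move=> p /= ->.
exact: Pstar_orb (FP _ Fh) Pg.
Qed.

Section KernelClosure.
Variables (T : topologicalType) (le : T -> T -> Prop).
Variable F : set {ptws T -> bool}.
Hypothesis filterF : Pstar_filter le F.
Variable g : {ptws T -> bool}.
Hypothesis Pstar_g : Pstar le g.
Hypothesis kernel_sub_g : filter_kernel F `<=` [set p | g p].

Let joins_below (h : {ptws T -> bool}) : set {ptws T -> bool} :=
  [set k | exists2 h', F h' /\ seg_sub h' h & k = (fun p => h' p || g p)].

Let joins_filter := filter_from F joins_below.

Let joins_below_in_F h : joins_below h `<=` F.
Proof. by move=> k [h' [Fh' _] ->]; exact: Pstar_filter_orb filterF Fh' Pstar_g. Qed.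

Let joins_filter_proper : ProperFilter joins_filter.
Proof.
have [FP [[h0 Fh0] [FI _]]] := filterF.
apply: filter_from_proper; last first.
  by move=> h Fh; exists (fun p => h p || g p); exists h => //; split.
apply: filter_from_filter; first by exists h0.
move=> i j Fi Fj; exists (fun p => i p && j p); first exact: FI.
by move=> k [h' [Fh' sh] ->]; split; exists h' => //; split => // p /sh /andP[].
Qed.

Let joins_filter_cvg : joins_filter --> g.
Proof.
have jproper := joins_filter_proper.
apply/pointwise_cvgP => t; apply/discrete_cvg.
have [h0 Fh0] := filterF.2.1.
case gt: (g t).
  by exists h0 => // k [h' _ ->]; rewrite /= gt orbT.
have [h Fh ht] : exists2 h, F h & ~~ h t.
  apply: contrapT => noh; move: gt; rewrite kernel_sub_g // => h Fh.
  by apply: contrapT => /negP ht; apply: noh; exists h.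
exists h => // k [h' [_ sh] ->] /=; rewrite gt orbF.
by apply/negP => /sh; apply/negP.
Qed.

Lemma kernel_sub_closure : closure F g.
Proof.
rewrite closureEcvg; exists joins_filter => //; split; first exact: joins_filter_cvg.
move=> A FA; have [h0 Fh0] := filterF.2.1.
by exists h0 => // k /joins_below_in_F /FA.
Qed.

End KernelClosure.

Lemma closed_Pstar_filter_kernel_sub (T : topologicalType)
    (le : T -> T -> Prop) (F : set {ptws T -> bool}) (g : {ptws T -> bool}) :
  Pstar_filter le F -> Pstar_closed le F ->
  Pstar le g -> filter_kernel F `<=` [set p | g p] -> F g.
Proof.
move=> filterF [C [cC FC]] Pg Bg.
have FsubC : F `<=` C by rewrite FC; exact: subIsetl.
rewrite FC; split => //; apply: cC.
apply: (closureS FsubC); exact (kernel_sub_closure filterF Pg Bg).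
Qed.

Theorem mainTheorem14 (T : topologicalType) (le : T -> T -> Prop)
  (F : set {ptws T -> bool}) :
  poset_rel le -> hausdorff_space T -> two_separated le ->
  Pstar_filter le F -> Pstar_closed le F ->
  let B := [set p : T | forall g, F g -> g p] in
  F = [set g | Pstar le g /\ B `<=` [set p | g p]] /\ B !=set0.
Proof.
move=> _ _ _ filterF closedF B.
have kernelF := closed_Pstar_filter_kernel_sub filterF closedF.
split.
  apply/seteqP; split => g; last by move=> [Pg Bg]; exact: kernelF.
  by move=> Fg; split; [exact: filterF.1 | move=> p; apply].
apply: contrapT => /set0P/negP; rewrite negbK => /eqP B0.
apply: filterF.2.2.2.2; apply: kernelF; first by split; [exact: cst_continuous|].
by rewrite /filter_kernel -/B B0.
Qed.
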